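(* Let $p$ be a prime and $A_*$ a graded commutative algebra over $\mathbb F_p$. Then $D_1(G_p(A_* ))=\Gamma_1(G_p(A_* ))\subset G_p^{(0.5)}(A_* )$, and for every positive integer $k$, $$D_{k+1}(G_p(A_* ))\subset G_p^{(2k)}(A_* ),\qquad \Gamma_{k+1}(G_p(A_* ))\subset G_p^{(k+0.5)}(A_* ).$$
   Context: Graded commutative means $ab=(-1)^{\deg a\deg b}ba$. If $p=2$, $G_2(A_* )$ is the set of power series $\alpha(X)=\sum_{i\ge0}\alpha_iX^{2^i}\in A_*[[X]]$ ($X$ of degree $-1$) with $\alpha_i\in A_{2^i-1}$ and $\alpha_0=1$; in this case put $\epsilon=0$. If $p$ is odd, let $\epsilon$ have degree $-1$ with $\epsilon^2=0$, $X$ degree $-2$, and $G_p(A_* )$ is the set of $\alpha(X)=\sum_{i\ge0}\alpha_iX^{p^i}\in (A_*\otimes_{\mathbb F_p}\mathbb F_p[\epsilon]/(\epsilon^2))[[X]]$ with $\alpha_i$ homogeneous of degree $2(p^i-1)$ and $\alpha_0-1\in(\epsilon)$. The group law is $\alpha(X)\cdot\beta(X)=\beta(\alpha(X))$, i.e. the coefficient of $X^{p^i}$ in $\alpha\cdot\beta$ is $\sum_{j=0}^i\alpha_{i-j}^{p^j}\beta_j$; the identity is $X$. For an integer $k\ge0$, $G_p^{(k)}(A_* )$ is the subgroup of elements of the form $X+\sum_{i\ge k+1}\alpha_iX^{p^i}$, and $G_p^{(k+0.5)}(A_* )$ is the subgroup of elements of the form $X+\sum_{i\ge k+1}\alpha_iX^{p^i}$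 with $\alpha_{k+1}\in(\epsilon)$. For a group $G$, $D_0(G)=\Gamma_0(G)=G$, $D_{k+1}(G)=[D_k(G),D_k(G)]$ and $\Gamma_{k+1}(G)=[\Gamma_k(G),G]$, where $[H,K]$ is the subgroup generated by commutators. *)

From mathcomp Require Import all_boot all_order all_algebra.
From Stdlib Require Import ClassicalEpsilon.
Set Implicit Arguments. Unset Strict Implicit. Unset Printing Implicit Defensive.
Import GRing.Theory Num.Theory.
Local Open Scope ring_scope.

Section GradedGroup.
Variable R : pzRingType.

(* A_*  : a Z-graded ring R = (+)_n A n which is graded commutative.
   (Being an F_p-algebra is the separate hypothesis p%:R = 0.) *)
Definition graded_comm_alg (A : int -> {pred R}) : Prop :=
  [/\ (forall n, 0 \in A n /\ forall x y, x \in A n -> y \in A n -> x - y \in A n)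
      /\ 1 \in A 0,
      (forall m n x y, x \in A m -> y \in A n -> x * y \in A (m + n)),
      (forall x : R, exists (s : seq int) (f : int -> R),
          (forall n, f n \in A n) /\ x = \sum_(n <- s) f n),
      (forall (s : seq int) (f : int -> R), uniq s -> (forall n, f n \in A n) ->
          \sum_(n <- s) f n = 0 -> forall n, n \in s -> f n = 0) &
      (forall m n x y, x \in A m -> y \in A n ->
          x * y = (-1) ^+ absz (m * n) * (y * x))].

(* An element a + b*eps of A_*  (x) F_p[eps]/(eps^2) is the pair (a, b).
   For homogeneous elements of even total degree (the only ones occurring
   in G_p), eps commutes with them, and the product is the one below. *)
Definition dmul (x y : R * R) : R * R := (x.1 * y.1, x.1 * y.2 + x.2 * y.1).
Definition dexp (x : R * R) (n : nat) : R * R := iter n (dmul x) (1, 0).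

(* A power series sum_i alpha_i X^(p^i) is its coefficient sequence. *)
Definition ser := nat -> R * R.

Definition inG (p : nat) (A : int -> {pred R}) (al : ser) : Prop :=
  if p == 2%N then
    (al 0%N).1 = 1 /\ forall i, (al i).2 = 0 /\ (al i).1 \in A (2 ^ i - 1)%N%:Z
  else
    (al 0%N).1 = 1 /\ forall i, (al i).1 \in A (2 * (p ^ i - 1))%N%:Z /\
                                (al i).2 \in A (2 * (p ^ i - 1)).+1%N%:Z.

Definition Gmul (p : nat) (al be : ser) : ser := fun i =>
  (\sum_(j < i.+1) (dmul (dexp (al (i - j)%N) (p ^ j)) (be j)).1,
   \sum_(j < i.+1) (dmul (dexp (al (i - j)%N) (p ^ j)) (be j)).2).

Definition Gone : ser := fun i => if i == 0%N then (1, 0) else (0, 0).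

Lemma Gone_inh : inhabited ser. Proof. exact: inhabits Gone. Qed.

(* group inverse (chosen; unique since G_p(A) is a group) *)
Definition Ginv (p : nat) (A : int -> {pred R}) (al : ser) : ser :=
  epsilon Gone_inh (fun be => inG p A be /\ Gmul p al be = Gone).

Definition Gcomm p A (x y : ser) : ser :=
  Gmul p (Gmul p (Ginv p A x) (Ginv p A y)) (Gmul p x y).

Definition is_subgroup p A (H : ser -> Prop) : Prop :=
  [/\ forall x, H x -> inG p A x,
      H Gone,
      (forall x y, H x -> H y -> H (Gmul p x y)) &
      (forall x, H x -> H (Ginv p A x))].

Definition gen p A (S : ser -> Prop) : ser -> Prop :=
  fun x => forall H, is_subgroup p A H -> (forall y, S y -> H y) -> H x.

Definition commg p A (H K : ser -> Prop) : ser -> Prop :=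
  gen p A (fun c => exists x y, [/\ H x, K y & c = Gcomm p A x y]).

Fixpoint Dser p A (k : nat) : ser -> Prop :=
  if k is k'.+1 then commg p A (Dser p A k') (Dser p A k') else inG p A.
Fixpoint Gser p A (k : nat) : ser -> Prop :=
  if k is k'.+1 then commg p A (Gser p A k') (inG p A) else inG p A.

Definition Gfilt p A (k : nat) (al : ser) : Prop :=
  inG p A al /\ al 0%N = (1, 0) /\ forall i, (1 <= i <= k)%N -> al i = (0, 0).

(* G_p^(k+0.5): additionally alpha_(k+1) in (eps) *)
Definition Gfilt_half p A (k : nat) (al : ser) : Prop :=
  Gfilt p A k al /\ (al k.+1).1 = 0.

End GradedGroup.

(* G_p(A) is a group of additive power series under composition.  The eps-free parts a_i
   of the coefficients alpha_i = a_i + b_i eps have even degree (or p = 2), so they are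
   central, Frobenius x |-> x ^+ p is additive on them, and the coefficient of X^(p^i) in
   a product is sum_j a_(i-j)^(p^j) b_j.  The coefficients of xy and yx can only differ
   through the terms with 0 < j < i, and these vanish while x and y are close to X.
   Measure closeness by the number of leading entries of a_0, b_0, a_1, b_1, ... that
   agree with those of X: if x agrees with X on 2k+1 entries then xy and yx agree on
   2k+3, and if x and y agree with X on n >= 2 entries then xy and yx agree on 2n.
   Agreement with X on n entries is a subgroup, and xy = yx [x, y] hands the agreement of
   xy and yx on to [x, y]; by induction Gamma_k agrees with X on 2k+1 entries and D_(k+1)
   on 4k+2. *)

From Pilot Require Import Defs.
From mathcomp Require Import all_boot all_order all_algebra.
From mathcomp Require Import zify.
From Stdlib Require Import ClassicalEpsilon FunctionalExtensionality.
Set Implicit Arguments. Unset Strict Implicit. Unset Printing Implicit Defensive.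
Import GRing.Theory.
Local Open Scope ring_scope.

Local Notation fsts x := (fun k : nat => (x k).1).
Local Notation snds x := (fun k : nat => (x k).2).

Section AdditiveSeries.
Variables (R : pzRingType) (p : nat).
Hypotheses (p_prime : prime p) (pR : p%:R = 0 :> R).

Definition central (c : R) := forall r, GRing.comm r c.

Lemma mulrn_char (x : R) : x *+ p = 0.
Proof. by rewrite -mulr_natr pR mulr0. Qed.

Lemma mulrn_char_exp (x : R) j : (0 < j)%N -> x *+ p ^ j = 0.
Proof. by case: j => // j _; rewrite expnS mulrnA mulrn_char mul0rn. Qed.

Lemma expr0_char_exp j : (0 : R) ^+ (p ^ j) = 0.
Proof. by rewrite expr0n expn_eq0 eqn0Ngt prime_gt0. Qed.

Lemma exprD_char (x y : R) : GRing.comm x y -> (x + y) ^+ p = x ^+ p + y ^+ p.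
Proof.
move=> cxy; have p_gt0 := prime_gt0 p_prime; have defp := prednK p_gt0.
rewrite exprDn_comm // big_ord_recr subnn -defp big_ord_recl /= defp.
rewrite subn0 mulr1 mul1r bin0 binn big1 ?addr0 // => i _.
have /dvdnP [q ->] : (p %| 'C(p, bump 0 i))%N.
  by apply: prime_dvd_bin; rewrite //= -[X in (_ < X)%N]defp /bump add1n ltnS.
by rewrite mulrnA mulrn_char.
Qed.

Lemma exprD_char_exp (x y : R) j : GRing.comm x y ->
  (x + y) ^+ (p ^ j) = x ^+ (p ^ j) + y ^+ (p ^ j).
Proof.
move=> cxy; elim: j => [|j IH]; first by rewrite !expr1.
by rewrite expnSr !exprM IH exprD_char //; apply/commrX/commr_sym/commrX/commr_sym.
Qed.

Lemma expr_sum_char_exp j n (F : 'I_n -> R) : (forall k, central (F k)) ->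
  (\sum_(k < n) F k) ^+ (p ^ j) = \sum_(k < n) F k ^+ (p ^ j).
Proof.
elim: n F => [|n IH] F cF.
  by rewrite !big_ord0 expr0_char_exp.
rewrite !big_ord_recr /= exprD_char_exp ?IH //.
by apply/commr_sym/commr_sum => k _; apply: cF.
Qed.

(* The coefficient of X^(p^i) in b(a(X)), for additive series a and b. *)
Definition comp_coef (a b : nat -> R) (i : nat) : R :=
  \sum_(j < i.+1) a (i - j)%N ^+ (p ^ j) * b j.

Lemma comp_coef0 (a b : nat -> R) : comp_coef a b 0 = a 0%N * b 0%N.
Proof. by rewrite /comp_coef big_ord1 expr1. Qed.

Lemma comp_coef_last (a b : nat -> R) i : a 0%N = 1 ->
  comp_coef a b i = \sum_(j < i) a (i - j)%N ^+ (p ^ j) * b j + b i.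
Proof. by move=> a0; rewrite /comp_coef big_ord_recr /= subnn a0 expr1n mul1r. Qed.

Lemma comp_coef_first (a b : nat -> R) i :
  comp_coef a b i = a i * b 0%N + \sum_(j < i) a (i - j.+1)%N ^+ (p ^ j.+1) * b j.+1.
Proof. by rewrite /comp_coef big_ord_recl /= subn0 expr1. Qed.

Lemma eq_comp_coef (a b c : nat -> R) i : (forall j, (j <= i)%N -> b j = c j) ->
  comp_coef a b i = comp_coef a c i.
Proof. by move=> bc; apply: eq_bigr => j _; rewrite bc // -ltnS. Qed.

Lemma comp_coefD (a b c : nat -> R) i :
  comp_coef a (fun k => b k + c k) i = comp_coef a b i + comp_coef a c i.
Proof. by rewrite /comp_coef -big_split; apply: eq_bigr => j _; rewrite mulrDr. Qed.

Lemma comp_coefMr (a b : nat -> R) r i :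
  comp_coef a (fun k => b k * r) i = comp_coef a b i * r.
Proof. by rewrite /comp_coef mulr_suml; apply: eq_bigr => j _; rewrite mulrA. Qed.

Lemma comp_coef_central (a b : nat -> R) i :
  (forall k, central (a k)) -> (forall k, central (b k)) -> central (comp_coef a b i).
Proof.
move=> ca cb r; apply: commr_sum => j _.
by apply: commrM; [apply: commrX; apply: ca | apply: cb].
Qed.

Lemma comp_coef_assoc (a b c : nat -> R) i :
  (forall k, central (a k)) -> (forall k, central (b k)) ->
  comp_coef (comp_coef a b) c i = comp_coef a (comp_coef b c) i.
Proof.
move=> ca cb.
pose T j l := a (i - l)%N ^+ (p ^ l) * b (l - j)%N ^+ (p ^ j) * c j.
have inner j : (j <= i)%N ->
    comp_coef a b (i - j) ^+ (p ^ j) * c j = \sum_(j <= l < i.+1) T j l.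
  move=> ji; rewrite expr_sum_char_exp => [|k r]; last first.
    by apply: commrM; [apply: commrX; apply: ca | apply: cb].
  rewrite mulr_suml (big_addn 0 _ j) -subSn // big_mkord; apply: eq_bigr => k _.
  rewrite exprMn_comm; last exact: cb.
  by rewrite -exprM -expnD /T addnK addnC subnDA.
transitivity (\sum_(0 <= j < i.+1) \sum_(j <= l < i.+1) T j l).
  by rewrite big_mkord; apply: eq_bigr => j _; apply: inner; rewrite -ltnS.
under eq_bigr => j _ do rewrite (big_nat_widenl j 0) //.
rewrite (exchange_big_dep_nat xpredT) //= /comp_coef big_mkord.
apply: eq_bigr => l _; rewrite mulr_sumr.
rewrite -(big_nat_widen 0 l.+1 i.+1 xpredT (fun j => T j l)) // big_mkord.
by apply: eq_bigr => j _; rewrite /T mulrA.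
Qed.

Lemma dexpE (x : R * R) n : GRing.comm x.1 x.2 ->
  dexp x n = (x.1 ^+ n, x.1 ^+ n.-1 * x.2 *+ n).
Proof.
move=> cx; elim: n => [|n IH]; first by rewrite /dexp /= mulr0n.
rewrite /dexp iterS -/(dexp x n) IH /dmul /=; congr (_, _); first by rewrite exprS.
case: n {IH} => [|n] /=; first by rewrite mulr0n mulr0 add0r expr0 mulr1 mul1r.
rewrite mulrnAr mulrA -exprS (mulrS _ n.+1) addrC; congr (_ + _).
by rewrite (commrX n.+1 (commr_sym cx)).
Qed.

Lemma dexp_char_exp (x : R * R) j : GRing.comm x.1 x.2 ->
  dexp x (p ^ j) = (x.1 ^+ (p ^ j), if j == 0%N then x.2 else 0).
Proof.
move=> cx; rewrite dexpE //; congr (_, _); case: j => [|j] /=.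
  by rewrite expn0 expr0 mul1r.
by rewrite mulrn_char_exp.
Qed.

Definition central_ser (x : ser R) := forall k, central (x k).1.

Lemma GmulE (a b : ser R) i : central_ser a ->
  Gmul p a b i = (comp_coef (fsts a) (fsts b) i,
                  comp_coef (fsts a) (snds b) i + (a i).2 * (b 0%N).1).
Proof.
move=> ca; have cak k : GRing.comm (a k).1 (a k).2 by apply/commr_sym/ca.
rewrite /Gmul; congr (_, _); first by apply: eq_bigr => j _; rewrite dexp_char_exp.
under eq_bigr => j _ do rewrite dexp_char_exp //=.
rewrite big_split /=; congr (_ + _).
by rewrite big_ord_recl /= subn0 big1 ?addr0 // => j _; rewrite mul0r.
Qed.

Lemma Gmul_central (a b : ser R) : central_ser a -> central_ser b ->
  central_ser (Gmul p a b).
Proof. by move=> ca cb k; rewrite GmulE //; apply: comp_coef_central. Qed.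

Lemma GoneE i : Gone R i = ((i == 0%N)%:R, 0).
Proof. by case: i. Qed.

Lemma Gone_central : central_ser (Gone R).
Proof. by move=> k r; rewrite GoneE; apply: commr_nat. Qed.

Lemma Gmul1l (x : ser R) : Gmul p (Gone R) x = x.
Proof.
have Gone_pow j i : (j < i)%N -> (Gone R (i - j)%N).1 ^+ (p ^ j) = 0.
  by move=> ji; rewrite GoneE subn_eq0 leqNgt ji expr0_char_exp.
apply: functional_extensionality => i; rewrite GmulE; last exact: Gone_central.
rewrite !comp_coef_last ?GoneE //= !big1 ?add0r ?mul0r ?addr0; first by case: (x i).
all: by move=> j _; rewrite Gone_pow ?mul0r.
Qed.

Lemma Gmul1r (x : ser R) : central_ser x -> Gmul p x (Gone R) = x.
Proof.
move=> cx; apply: functional_extensionality => i; rewrite GmulE //.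
rewrite !comp_coef_first /= !big1 ?mulr0 ?mulr1 ?addr0 ?add0r //; first by case: (x i).
all: by move=> j _; rewrite mulr0.
Qed.

Lemma Gmul_assoc (x y z : ser R) : central_ser x -> central_ser y ->
  Gmul p (Gmul p x y) z = Gmul p x (Gmul p y z).
Proof.
move=> cx cy; have cxy := Gmul_central cx cy.
apply: functional_extensionality => i.
have GmulE1 a b : central_ser a -> fsts (Gmul p a b) = comp_coef (fsts a) (fsts b).
  by move=> ca; apply: functional_extensionality => k; rewrite GmulE.
rewrite GmulE // [RHS]GmulE // !GmulE1 //.
have -> : snds (Gmul p y z) =
    (fun k => comp_coef (fsts y) (snds z) k + (y k).2 * (z 0%N).1).
  by apply: functional_extensionality => k; rewrite GmulE.
rewrite !comp_coef_assoc // comp_coefD comp_coefMr !GmulE //= comp_coef0.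
by rewrite mulrDl addrA mulrA.
Qed.

Section Inverse.
Variable x : ser R.

(* Solves (x * y)_i = (Gone R)_i for y_i given the y_j with j < i, using (x 0).1 = 1. *)
Definition inv_step (s : seq (R * R)) : R * R :=
  ((size s == 0%N)%:R -
     \sum_(j < size s) (x (size s - j)%N).1 ^+ (p ^ j) * (nth (0, 0) s j).1,
   - (\sum_(j < size s) (x (size s - j)%N).1 ^+ (p ^ j) * (nth (0, 0) s j).2
      + (x (size s)).2)).

Fixpoint inv_prefix (n : nat) : seq (R * R) :=
  if n is n'.+1 then rcons (inv_prefix n') (inv_step (inv_prefix n')) else [::].

Definition inv_ser : ser R := fun i => nth (0, 0) (inv_prefix i.+1) i.

Lemma inv_prefixE n : inv_prefix n = mkseq inv_ser n.
Proof.
have size_prefix m : size (inv_prefix m) = m.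
  by elim: m => //= m IH; rewrite size_rcons IH.
elim: n => // n IH.
have -> : mkseq inv_ser n.+1 = rcons (mkseq inv_ser n) (inv_ser n).
  by rewrite /mkseq -addn1 iotaD map_cat /= cats1.
by rewrite -IH /= /inv_ser /= nth_rcons size_prefix ltnn eqxx.
Qed.

Lemma inv_serE i : inv_ser i =
  ((i == 0%N)%:R - \sum_(j < i) (x (i - j)%N).1 ^+ (p ^ j) * (inv_ser j).1,
   - (\sum_(j < i) (x (i - j)%N).1 ^+ (p ^ j) * (inv_ser j).2 + (x i).2)).
Proof.
rewrite {1}/inv_ser /= inv_prefixE nth_rcons size_mkseq ltnn eqxx /inv_step size_mkseq.
by congr (_ - _, - (_ + _)); apply: eq_bigr => j _; rewrite nth_mkseq.
Qed.

Lemma Gmul_inv_ser : central_ser x -> (x 0%N).1 = 1 -> Gmul p x inv_ser = Gone R.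
Proof.
move=> cx x0; apply: functional_extensionality => i.
rewrite GmulE // GoneE !comp_coef_last // !inv_serE /= big_ord0 subr0 mulr1.
by congr (_, _); [rewrite addrC subrK | rewrite opprD addrA subrr add0r addNr].
Qed.

End Inverse.

(* Agreement on the first n entries of (u 0).1, (u 0).2, (u 1).1, (u 1).2, ...:
   G^(k) is agreement with X on 2k+2 entries, and G^(k+0.5) on 2k+3. *)
Definition agree (n : nat) (u v : ser R) : Prop :=
  (forall i, (2 * i < n)%N -> (u i).1 = (v i).1) /\
  (forall i, ((2 * i).+1 < n)%N -> (u i).2 = (v i).2).

Lemma agree_le m n (u v : ser R) : (m <= n)%N -> agree n u v -> agree m u v.
Proof.
by move=> mn [h1 h2]; split=> i hi; [apply: h1 | apply: h2]; apply: leq_trans mn.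
Qed.

Lemma agree_sym n (u v : ser R) : agree n u v -> agree n v u.
Proof. by case=> h1 h2; split=> i hi; [rewrite h1 | rewrite h2]. Qed.

Lemma agree_trans n (u v w : ser R) : agree n u v -> agree n v w -> agree n u w.
Proof. by case=> h1 h2 [h3 h4]; split=> i hi; [rewrite h1 ?h3 | rewrite h2 ?h4]. Qed.

Lemma Gmul_agree n (z u v : ser R) : central_ser z ->
  agree n u v -> agree n (Gmul p z u) (Gmul p z v).
Proof.
move=> cz [h1 h2]; split=> i hi; rewrite !GmulE //=.
  by apply: eq_comp_coef => j ji; apply/h1/leq_ltn_trans/hi; rewrite leq_mul2l.
rewrite h1 ?muln0; last exact: leq_ltn_trans hi.
congr (_ + _); apply: eq_comp_coef => j ji.
by apply/h2/leq_ltn_trans/hi; rewrite ltnS leq_mul2l.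
Qed.

Definition mid_coef (a b : nat -> R) (i : nat) : R :=
  \sum_(1 <= j < i) a (i - j)%N ^+ (p ^ j) * b j.

Lemma comp_coef_mid (a b : nat -> R) i : a 0%N = 1 -> (0 < i)%N ->
  comp_coef a b i = a i * b 0%N + mid_coef a b i + b i.
Proof.
move=> a0 i0; rewrite comp_coef_last //; congr (_ + _).
rewrite -(big_mkord xpredT (fun j => a (i - j)%N ^+ (p ^ j) * b j)) (big_ltn i0).
by rewrite subn0 expr1.
Qed.

Lemma mid_coef_eq0 (a b : nat -> R) i :
  (forall j, (0 < j < i)%N -> a (i - j)%N = 0 \/ b j = 0) -> mid_coef a b i = 0.
Proof.
move=> ab; rewrite /mid_coef big_nat_cond big1 // => j /andP [/ab [->|->] _].
  by rewrite expr0_char_exp mul0r.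
by rewrite mulr0.
Qed.

Section Swap.
Variables x y : ser R.
Hypotheses (cx : central_ser x) (cy : central_ser y).
Hypotheses (x0 : (x 0%N).1 = 1) (y0 : (y 0%N).1 = 1).

Lemma Gmul_swap0 : Gmul p x y 0%N = Gmul p y x 0%N.
Proof. by rewrite !GmulE // !comp_coef0 x0 y0 !mul1r !mulr1 addrC. Qed.

Lemma Gmul_swap_fst i : (0 < i)%N ->
  mid_coef (fsts x) (fsts y) i = 0 -> mid_coef (fsts y) (fsts x) i = 0 ->
  (Gmul p x y i).1 = (Gmul p y x i).1.
Proof.
move=> i0 mxy myx; rewrite !GmulE //= !comp_coef_mid // mxy myx x0 y0.
by rewrite !mulr1 !addr0 addrC.
Qed.

Lemma Gmul_swap_snd i : (0 < i)%N ->
  mid_coef (fsts x) (snds y) i = 0 -> mid_coef (fsts y) (snds x) i = 0 ->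
  (x i).1 * (y 0%N).2 = (y i).1 * (x 0%N).2 ->
  (Gmul p x y i).2 = (Gmul p y x i).2.
Proof.
move=> i0 mxy myx e; rewrite !GmulE //= !comp_coef_mid // mxy myx x0 y0 !mulr1 !addr0 e.
by rewrite -!addrA; congr (_ + _); rewrite addrC.
Qed.

End Swap.

Section Graded.
Variable A : int -> {pred R}.
Hypothesis gc : graded_comm_alg A.

Lemma A0 n : 0 \in A n.
Proof. by case: gc => [[/(_ n) [] ] ]. Qed.

Lemma AN n x : x \in A n -> - x \in A n.
Proof.
move=> Ax; rewrite -sub0r; case: gc => [[/(_ n) [_ AB] _] _ _ _ _].
exact: AB (A0 n) Ax.
Qed.

Lemma AD n x y : x \in A n -> y \in A n -> x + y \in A n.
Proof.
case: gc => [[/(_ n) [_ AB] _] _ _ _ _] Ax /AN Ay.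
by rewrite -[y]opprK; apply: AB.
Qed.

Lemma A1 : 1 \in A 0.
Proof. by case: gc => [[]]. Qed.

Lemma AMn (m n : nat) x y : x \in A m -> y \in A n -> x * y \in A (m + n)%N.
Proof. by rewrite PoszD; case: gc => _ AM _ _ _; apply: AM. Qed.

Lemma AX (m : nat) x k : x \in A m -> x ^+ k \in A (m * k)%N.
Proof.
move=> Ax; elim: k => [|k IH]; first by rewrite muln0 expr0 A1.
by rewrite exprS mulnS; apply: AMn.
Qed.

Lemma A_sum n (I : finType) (P : pred I) (F : I -> R) :
  (forall k, P k -> F k \in A n) -> \sum_(k | P k) F k \in A n.
Proof. by move=> AF; elim/big_ind: _ => //; [apply: A0 | apply: AD]. Qed.

Definition coef_deg (i : nat) : nat :=
  if p == 2 then (2 ^ i - 1)%N else (2 * (p ^ i - 1))%N.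

Lemma coef_deg0 : coef_deg 0 = 0%N.
Proof. by rewrite /coef_deg; case: ifP. Qed.

Lemma coef_deg_comp i j : (j <= i)%N ->
  (coef_deg (i - j) * p ^ j + coef_deg j)%N = coef_deg i.
Proof.
move=> ji; have pij : (p ^ i = p ^ (i - j) * p ^ j)%N by rewrite -expnD subnK.
have P1 : (0 < p ^ (i - j))%N by rewrite expn_gt0 prime_gt0.
have Q1 : (0 < p ^ j)%N by rewrite expn_gt0 prime_gt0.
rewrite /coef_deg; case: eqP => [p2|_]; rewrite ?p2 in pij P1 Q1 *; rewrite pij;
  move: P1 Q1; move: (_ ^ (i - j))%N (_ ^ j)%N => P Q P1 Q1; nia.
Qed.

Lemma central_coef_deg i x : x \in A (coef_deg i) -> central x.
Proof.
move=> Ax r; case: gc => _ _ decomp _ gcomm.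
have [s [f [Af ->]]] := decomp r.
rewrite /GRing.comm mulr_sumr mulr_suml; apply: eq_bigr => n _.
rewrite (gcomm _ _ _ _ (Af n) Ax) abszM.
suff -> : (-1) ^+ (`|n| * `|coef_deg i|)%N = 1 :> R by rewrite mul1r.
rewrite /coef_deg; case: eqP => [p2|_].
  have /eqP := pR; rewrite p2 -[2%N]/(1 + 1)%N natrD addr_eq0 => /eqP <-.
  by rewrite expr1n.
by rewrite /= mulnCA exprM sqrrN !expr1n.
Qed.

(* The eps-part of a coefficient of degree n - 1 lies in degree n, since eps has degree -1;
   for p = 2 there is no eps-part. *)
Definition eps_in (n : nat) (r : R) : Prop := if p == 2 then r = 0 else r \in A n.

Lemma eps_in0 n : eps_in n 0.
Proof. by rewrite /eps_in; case: ifP => // _; apply: A0. Qed.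

Lemma eps_inD n x y : eps_in n x -> eps_in n y -> eps_in n (x + y).
Proof. by rewrite /eps_in; case: ifP => _; [move=> -> ->; rewrite addr0 | apply: AD]. Qed.

Lemma eps_inN n x : eps_in n x -> eps_in n (- x).
Proof. by rewrite /eps_in; case: ifP => _; [move=> ->; rewrite oppr0 | apply: AN]. Qed.

Lemma eps_in_sum n k (F : 'I_k -> R) :
  (forall j, eps_in n (F j)) -> eps_in n (\sum_(j < k) F j).
Proof. by move=> HF; elim/big_ind: _ => //; [apply: eps_in0 | apply: eps_inD]. Qed.

Lemma eps_inMl (m n : nat) a r : a \in A m -> eps_in n r -> eps_in (m + n) (a * r).
Proof. by rewrite /eps_in; case: ifP => _; [move=> _ ->; rewrite mulr0 | apply: AMn]. Qed.

Definition coef_in (i : nat) (z : R * R) : Prop :=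
  z.1 \in A (coef_deg i) /\ eps_in (coef_deg i).+1 z.2.

Lemma inGP (x : ser R) : inG p A x <-> (x 0%N).1 = 1 /\ forall i, coef_in i (x i).
Proof.
rewrite /inG /coef_in /eps_in /coef_deg; case: ifP => _.
  by split=> -[x0 Ax]; split=> // i; have [? ?] := Ax i.
by split=> -[x0 Ax].
Qed.

Lemma inG_central (x : ser R) : inG p A x -> central_ser x.
Proof. by case/inGP => _ Ax k; apply: (central_coef_deg (Ax k).1). Qed.

Lemma comp_coef_in (a b : nat -> R) i :
  (forall k, a k \in A (coef_deg k)) -> (forall k, b k \in A (coef_deg k)) ->
  comp_coef a b i \in A (coef_deg i).
Proof.
move=> Aa Ab; apply: A_sum => j _.
by rewrite -(coef_deg_comp (ltn_ord j : (j <= i)%N)); apply: AMn; [apply: AX | apply: Ab].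
Qed.

Lemma comp_coef_eps_in (a b : nat -> R) i :
  (forall k, a k \in A (coef_deg k)) -> (forall k, eps_in (coef_deg k).+1 (b k)) ->
  eps_in (coef_deg i).+1 (comp_coef a b i).
Proof.
move=> Aa Ab; apply: eps_in_sum => j.
rewrite -(coef_deg_comp (ltn_ord j : (j <= i)%N)) -addnS.
by apply: eps_inMl; [apply: AX | apply: Ab].
Qed.

Lemma Gmul_inG (x y : ser R) : inG p A x -> inG p A y -> inG p A (Gmul p x y).
Proof.
move=> Gx Gy; have cx := inG_central Gx.
case/inGP: Gx => x0 Ax; case/inGP: Gy => y0 Ay; apply/inGP.
split=> [|i]; first by rewrite GmulE //= comp_coef0 x0 y0 mulr1.
rewrite GmulE //; split=> /=.
  by apply: comp_coef_in => k; [case: (Ax k) | case: (Ay k)].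
apply: eps_inD; first by apply: comp_coef_eps_in => k; [case: (Ax k) | case: (Ay k)].
by rewrite y0 mulr1; case: (Ax i).
Qed.

Lemma Gone_inG : inG p A (Gone R).
Proof.
apply/inGP; split=> [|[|i]]; rewrite GoneE //; split; try exact: eps_in0.
  by rewrite coef_deg0 A1.
exact: A0.
Qed.

Lemma inv_ser_inG (x : ser R) : inG p A x -> inG p A (inv_ser x).
Proof.
case/inGP=> x0 Ax; apply/inGP; split; first by rewrite inv_serE big_ord0 subr0.
elim/ltn_ind=> i IH; rewrite inv_serE; split=> /=.
  apply: AD; first by case: i {IH} => [|i]; [rewrite coef_deg0 A1 | apply: A0].
  apply/AN/A_sum => j _; rewrite -(coef_deg_comp (ltnW (ltn_ord j))).
  by apply: AMn; [apply: AX; case: (Ax (i - j)%N) | case: (IH j (ltn_ord j))].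
apply/eps_inN/eps_inD; last by case: (Ax i).
apply: eps_in_sum => j; rewrite -(coef_deg_comp (ltnW (ltn_ord j))) -addnS.
by apply: eps_inMl; [apply: AX; case: (Ax (i - j)%N) | case: (IH j (ltn_ord j))].
Qed.

Lemma Ginv_spec (x : ser R) :
  inG p A x -> inG p A (Ginv p A x) /\ Gmul p x (Ginv p A x) = Gone R.
Proof.
move=> Gx; apply: (epsilon_spec (Gone_inh R) (fun y => inG p A y /\ Gmul p x y = Gone R)).
exists (inv_ser x); split; first exact: inv_ser_inG.
by apply: Gmul_inv_ser; [apply: inG_central | case/inGP: Gx].
Qed.

Lemma Ginv_inG (x : ser R) : inG p A x -> inG p A (Ginv p A x).
Proof. by case/Ginv_spec. Qed.

Lemma GmulV (x : ser R) : inG p A x -> Gmul p x (Ginv p A x) = Gone R.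
Proof. by case/Ginv_spec. Qed.

Lemma GmulK (x u : ser R) : inG p A x -> Gmul p (Ginv p A x) (Gmul p x u) = u.
Proof.
move=> Gx; have Gx' := Ginv_inG Gx; have Gx'' := Ginv_inG Gx'.
have cx := inG_central Gx; have cx' := inG_central Gx'.
have xK : Ginv p A (Ginv p A x) = x.
  by rewrite -[LHS]Gmul1l -(GmulV Gx) Gmul_assoc ?GmulV ?Gmul1r.
by rewrite -Gmul_assoc // -{2}xK GmulV ?Gmul1l.
Qed.

Lemma Gcomm_inG (x y : ser R) : inG p A x -> inG p A y -> inG p A (Gcomm p A x y).
Proof. by move=> Gx Gy; do 2?apply: Gmul_inG => //; apply: Ginv_inG. Qed.

Lemma Gmul_Gcomm (x y : ser R) : inG p A x -> inG p A y ->
  Gmul p (Gmul p y x) (Gcomm p A x y) = Gmul p x y.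
Proof.
move=> Gx Gy; have Gx' := Ginv_inG Gx; have Gy' := Ginv_inG Gy.
have cx := inG_central Gx; have cy := inG_central Gy.
have cx' := inG_central Gx'; have cy' := inG_central Gy'.
rewrite /Gcomm -Gmul_assoc; try exact: Gmul_central.
by rewrite (Gmul_assoc _ cy cx) -(Gmul_assoc _ cx cx') GmulV // Gmul1l GmulV // Gmul1l.
Qed.

Lemma Gmul_agree_cancel n (z u v : ser R) : inG p A z ->
  agree n (Gmul p z u) (Gmul p z v) -> agree n u v.
Proof.
move=> Gz zuv; rewrite -(GmulK u Gz) -(GmulK v Gz).
exact/Gmul_agree/zuv/inG_central/Ginv_inG.
Qed.

Lemma agree_subgroup n : is_subgroup p A (fun x => inG p A x /\ agree n x (Gone R)).
Proof.
split=> [x [] //|||x [Gx x1]].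
- by split; [exact: Gone_inG | split].
- move=> x y [Gx x1] [Gy y1]; split; first exact: Gmul_inG.
  have cx := inG_central Gx; apply: agree_trans x1.
  by rewrite -{2}(Gmul1r cx); apply: Gmul_agree.
have Gx' := Ginv_inG Gx; split => //; apply: (Gmul_agree_cancel Gx).
by rewrite GmulV // (Gmul1r (inG_central Gx)); apply: agree_sym.
Qed.

Lemma Gcomm_agree n (x y : ser R) : inG p A x -> inG p A y ->
  agree n (Gmul p x y) (Gmul p y x) -> agree n (Gcomm p A x y) (Gone R).
Proof.
move=> Gx Gy xy_yx; have Gyx := Gmul_inG Gy Gx.
by apply: (Gmul_agree_cancel Gyx); rewrite Gmul_Gcomm // (Gmul1r (inG_central Gyx)).
Qed.

Lemma agree_Gone_zero n (x : ser R) : agree n x (Gone R) ->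
  (forall i, (0 < i)%N -> (2 * i < n)%N -> (x i).1 = 0) /\
  (forall i, ((2 * i).+1 < n)%N -> (x i).2 = 0).
Proof. by case=> x1 x2; split=> [[|i] // _ /x1|i /x2]; rewrite GoneE. Qed.

Lemma Gmul_swap_agree_odd k (x y : ser R) : inG p A x -> inG p A y ->
  agree (2 * k).+1 x (Gone R) -> agree (2 * k).+3 (Gmul p x y) (Gmul p y x).
Proof.
move=> Gx Gy /agree_Gone_zero [x1 x2].
have cx := inG_central Gx; have cy := inG_central Gy.
case/inGP: Gx => x0 _; case/inGP: Gy => y0 _.
split=> -[|i] hi; rewrite ?(Gmul_swap0 cx cy x0 y0) //.
  apply: (Gmul_swap_fst cx cy x0 y0) => //; apply: mid_coef_eq0 => j /andP [j0 ji].
    by left; apply: x1; lia.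
  by right; apply: x1; lia.
apply: (Gmul_swap_snd cx cy x0 y0) => //.
- by apply: mid_coef_eq0 => j /andP [j0 ji]; left; apply: x1; lia.
- by apply: mid_coef_eq0 => j /andP [j0 ji]; right; apply: x2; lia.
- by rewrite x1 ?x2 ?mul0r ?mulr0 //; lia.
Qed.

Lemma Gmul_swap_agree_double n (x y : ser R) :
  (1 < n)%N -> inG p A x -> inG p A y -> agree n x (Gone R) -> agree n y (Gone R) ->
  agree (2 * n) (Gmul p x y) (Gmul p y x).
Proof.
move=> n1 Gx Gy /agree_Gone_zero [x1 x2] /agree_Gone_zero [y1 y2].
have cx := inG_central Gx; have cy := inG_central Gy.
case/inGP: Gx => x0 _; case/inGP: Gy => y0 _.
split=> -[|i] hi; rewrite ?(Gmul_swap0 cx cy x0 y0) //.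
  apply: (Gmul_swap_fst cx cy x0 y0) => //; apply: mid_coef_eq0 => j /andP [j0 ji].
    have [jn|jn] := ltnP (2 * j) n; [right; apply: y1 | left; apply: x1]; lia.
  have [jn|jn] := ltnP (2 * j) n; [right; apply: x1 | left; apply: y1]; lia.
apply: (Gmul_swap_snd cx cy x0 y0) => //.
- apply: mid_coef_eq0 => j /andP [j0 ji].
  have [jn|jn] := ltnP (2 * j).+1 n; [right; apply: y2 | left; apply: x1]; lia.
- apply: mid_coef_eq0 => j /andP [j0 ji].
  have [jn|jn] := ltnP (2 * j).+1 n; [right; apply: x2 | left; apply: y1]; lia.
- by rewrite x2 ?y2 ?mulr0.
Qed.

Lemma commg_sub (H P Q : ser R -> Prop) : is_subgroup p A H ->
  (forall x y, P x -> Q y -> H (Gcomm p A x y)) -> forall z, Defs.commg p A P Q z -> H z.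
Proof. by move=> sH PQH z; apply=> // c [x [y [Px Qy ->]]]; apply: PQH. Qed.

Lemma Gser_agree k (x : ser R) :
  Gser p A k x -> inG p A x /\ agree (2 * k).+1 x (Gone R).
Proof.
elim: k x => [|k IH] x.
  move=> Gx; split=> //; split=> i hi; last by lia.
  have -> : i = 0%N by lia.
  by case/inGP: Gx.
move=> Gkx; apply: (commg_sub (agree_subgroup _) _ Gkx) => a b /IH [Ga a1] Gb.
split; first exact: Gcomm_inG.
by apply: Gcomm_agree => //; rewrite mulnS; apply: Gmul_swap_agree_odd.
Qed.

Lemma Dser_agree k (x : ser R) : (0 < k)%N ->
  Dser p A k.+1 x -> inG p A x /\ agree (2 * (2 * k)).+2 x (Gone R).
Proof.
elim: k x => [//|k IH] x _.
case: k IH => [|k] IH Dx; apply: (commg_sub (agree_subgroup _) _ Dx) => a b Da Db.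
  have [Ga a1] := Gser_agree (k := 1) Da; have [Gb b1] := Gser_agree (k := 1) Db.
  split; first exact: Gcomm_inG.
  by apply: Gcomm_agree => //; apply: (Gmul_swap_agree_double (n := 3)).
have [Ga a1] := IH a isT Da; have [Gb b1] := IH b isT Db.
split; first exact: Gcomm_inG.
apply: Gcomm_agree => //; apply: agree_le (Gmul_swap_agree_double _ Ga Gb a1 b1); lia.
Qed.

Lemma Gfilt_agree k (x : ser R) :
  inG p A x -> agree (2 * k).+2 x (Gone R) -> Gfilt p A k x.
Proof.
move=> Gx /agree_Gone_zero [x1 x2]; split=> //; split.
  by case/inGP: Gx => x0 _; rewrite [x 0%N]surjective_pairing x0 x2.
by move=> i /andP [i1 ik]; rewrite [x i]surjective_pairing x1 ?x2 //; lia.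
Qed.

Lemma Gfilt_half_agree k (x : ser R) :
  inG p A x -> agree (2 * k).+3 x (Gone R) -> Gfilt_half p A k x.
Proof.
move=> Gx xk; split; first by apply: Gfilt_agree (agree_le _ xk).
by case/agree_Gone_zero: xk => x1 _; apply: x1; lia.
Qed.

Lemma Gser_sub_Gfilt_half k (x : ser R) : Gser p A k.+1 x -> Gfilt_half p A k x.
Proof. by case/Gser_agree=> Gx; rewrite mulnS; apply: Gfilt_half_agree. Qed.

Lemma Dser_sub_Gfilt k (x : ser R) :
  (0 < k)%N -> Dser p A k.+1 x -> Gfilt p A (2 * k) x.
Proof. by move=> k0 /(Dser_agree k0) [Gx]; apply: Gfilt_agree. Qed.

End Graded.

End AdditiveSeries.

Theorem corollary3p3 (p : nat) (R : pzRingType) (A : int -> {pred R}) :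
  prime p -> (p%:R : R) = 0 -> graded_comm_alg A ->
  [/\ (forall x, Dser p A 1 x <-> Gser p A 1 x),
      (forall x, Dser p A 1 x -> Gfilt_half p A 0 x) &
      (forall k : nat, (0 < k)%N ->
         (forall x, Dser p A k.+1 x -> Gfilt p A (2 * k) x) /\
         (forall x, Gser p A k.+1 x -> Gfilt_half p A k x))].
Proof.
move=> p_prime pR gc; split=> [x|x|k k0]; first by [].
  exact: (Gser_sub_Gfilt_half p_prime pR gc (k := 0)).
by split=> x; [apply: Dser_sub_Gfilt | apply: Gser_sub_Gfilt_half].
Qed.
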